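(* Fix an integer $L\ge 1$ and a real $r\in[0,\frac{L}{L+1})$. There exist an integer $N=N(r,L)$ and a function $g_{r,L}:\mathbb{N}\to[0,\infty)$ with $g_{r,L}(n)\to 0$ as $n\to\infty$ such that the following holds. For every integer $q\ge 2$ and every $n\ge N$ with $rn\in\mathbb{N}$, every $(r,L)$ list-decodable code $C\subseteq[q]^n$ satisfies $$|C|\le \max\{q(1+g_{r,L}(n)),\,L\}\cdot q^{\,n-(\lfloor\frac{L+1}{L}rn\rfloor+1)}.$$
   Context: $[q]=\{1,\dots,q\}$. A code of length $n$ over an alphabet of size $q$ is a subset $C\subseteq[q]^n$. The Hamming distance $d(x,y)$ of $x,y\in[q]^n$ is the number of coordinates where they differ, and $B_t(v)$ is the set of vectors of $[q]^n$ at Hamming distance at most $t$ from $v$. A code $C\subseteq[q]^n$ is $(r,L)$ list-decodable if $|B_{rn}(v)\cap C|\le L$ for every $v\in[q]^n$. *)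

From HB Require Import structures.
From mathcomp Require Import all_boot all_order all_algebra.
From mathcomp Require Import all_classical all_reals all_analysis.
Set Implicit Arguments. Unset Strict Implicit. Unset Printing Implicit Defensive.
Import Order.TTheory GRing.Theory Num.Theory.
Local Open Scope ring_scope.

Definition word (q n : nat) := {ffun 'I_n -> 'I_q}.

Definition hamming (q n : nat) (x y : word q n) : nat :=
  #|[set i : 'I_n | x i != y i]|.

Definition list_decodable (R : realType) (q n : nat) (r : R) (L : nat)
  (C : {set word q n}) : Prop :=
  forall v : word q n,
    (#|[set c in C | ((hamming v c)%:R <= r * n%:R)%R]| <= L)%N.

(* Let k = r n and m = floor((L+1) k / L) + 1, and fix m coordinates J.  The
   code splits into at most q^(n-m) classes of codewords agreeing outside J, so
   it suffices to bound each class G by max(q (1 + L/m), L).  A coordinate j is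
   isolated for w in G when no other word of G agrees with w at j.  If |G| > L
   and some w has L non-isolated coordinates, then w, a witness for each of them
   and further words of G form L+1 codewords around which a center agreeing
   with each on m - k coordinates of J can be assembled (the choice of m makes
   the demands fit into J), contradicting list decodability.  Otherwise every
   word has more than m - L isolated coordinates while each coordinate is
   isolated for at most q words, so |G| (m + 1 - L) <= m q, which yields
   |G| <= q (1 + L/m) as soon as L^2 <= m.  Finally L/m <= L/(r (n+1)). *)

From mathcomp Require Import all_boot all_order all_algebra.
From mathcomp Require Import all_classical all_reals all_analysis.
From mathcomp Require Import zify ring.
(* Re-imported so that [subsetP], [subsetUl], ... denote the finset lemmas
   rather than their classical_sets homonyms. *)
From mathcomp Require Import fintype finset.
Set Implicit Arguments. Unset Strict Implicit. Unset Printing Implicit Defensive.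
Import Order.TTheory GRing.Theory Num.Theory.

Lemma exists_subset_card (T : finType) (B : {set T}) k :
  k <= #|B| -> exists2 A : {set T}, A \subset B & #|A| = k.
Proof.
move=> lekB; have : 0 < #|[set A : {set T} | A \subset B & #|A| == k]|.
  by rewrite cards_draws bin_gt0.
by case/card_gt0P => A; rewrite inE => /andP[sAB /eqP cardA]; exists A.
Qed.

Lemma exists_subset_card_between (T : finType) (A B : {set T}) k :
  A \subset B -> #|A| <= k <= #|B| ->
  exists S : {set T}, [/\ A \subset S, S \subset B & #|S| = k].
Proof.
move=> sAB /andP[leAk lekB].
have [D sDBA cardD] : exists2 D : {set T}, D \subset B :\: A & #|D| = k - #|A|.
  by apply: exists_subset_card; rewrite cardsDS // leq_sub2r.
have [sDB disAD] : D \subset B /\ [disjoint A & D].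
  by move: sDBA; rewrite subsetD disjoint_sym => /andP[].
exists (A :|: D); split; [exact: subsetUl | by rewrite subUset sAB |].
have [_] := leq_card_setU A D; rewrite disAD => /eqP->.
by rewrite cardD subnKC.
Qed.

Lemma card_sep_predC (T : finType) (A : {set T}) (P : pred T) :
  #|[set x in A | P x]| + #|[set x in A | ~~ P x]| = #|A|.
Proof.
by rewrite -(cardsID [set x | P x] A); congr (_ + _); apply: eq_card => x;
  rewrite !inE andbC.
Qed.

Lemma sum_card_sep (I J : finType) (A : {set I}) (B : {set J})
    (R : I -> J -> bool) :
  \sum_(i in A) #|[set j in B | R i j]| = \sum_(j in B) #|[set i in A | R i j]|.
Proof.
have card_sep (T : finType) (D : {set T}) (P : pred T) :
    #|[set x in D | P x]| = \sum_(x in D) P x.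
  rewrite -sum1_card big_mkcond [RHS]big_mkcond; apply: eq_bigr => x _.
  by rewrite inE; case: (x \in D); case: (P x).
under eq_bigr do rewrite card_sep.
by rewrite exchange_big; under [RHS]eq_bigr do rewrite card_sep.
Qed.

Lemma exists_fun_large_fibres (T X : finType) (x0 : X) (D : X -> nat)
    (s : seq X) (F : {set T}) :
  \sum_(u <- s) D u <= #|F| ->
  exists tau : T -> X, forall u, u \in s -> D u <= #|[set j in F | tau j == u]|.
Proof.
elim: s F => [|u s IHs] F; first by exists (fun=> x0).
rewrite big_cons => leDF.
have [A sAF cardA] :=
  @exists_subset_card _ F (D u) (leq_trans (leq_addr _ _) leDF).
have [tau tauP] : exists tau : T -> X,
    forall v, v \in s -> D v <= #|[set j in F :\: A | tau j == v]|.
  by apply: IHs; rewrite cardsDS // cardA; lia.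
exists (fun j => if j \in A then u else tau j) => v; rewrite inE.
case/predU1P => [-> | vs].
  rewrite -cardA; apply/subset_leq_card/subsetP => j jA.
  by rewrite inE jA (subsetP sAF) ?eqxx.
apply: leq_trans (tauP v vs) _; apply/subset_leq_card/subsetP => j.
rewrite !inE => /andP[/andP[jNA jF] /eqP <-].
by rewrite (negbTE jNA) jF eqxx.
Qed.

Lemma leq_mul_of_mul_subn (g m q L : nat) :
  L * L <= m -> g * (m + 1 - L) <= m * q -> g * m <= q * (m + L).
Proof.
move=> leLLm legq; have leLm : L <= m by nia.
rewrite -(@leq_pmul2r (m + 1 - L)); last lia.
have lem2 : m * m <= (m + L) * (m + 1 - L) by nia.
have := leq_mul lem2 (leqnn q); have := leq_mul (leqnn m) legq; nia.
Qed.

Section Words.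
Variables q n : nat.
Implicit Types (G S : {set word q n}) (J P : {set 'I_n}) (u v w : word q n).

Definition agree_outside J G :=
  forall x y, x \in G -> y \in G -> forall i, i \notin J -> x i = y i.

Lemma hamming_agree_outside J u v : (forall i, i \notin J -> v i = u i) ->
  hamming v u = #|J| - #|[set j in J | v j == u j]|.
Proof.
move=> eq_vu; rewrite -(card_sep_predC J (fun j => v j == u j)) addKn.
apply: eq_card => i; rewrite !inE; case: (boolP (i \in J)) => //= iNJ.
by rewrite eq_vu ?eqxx.
Qed.

Lemma exists_close_center S J P w0 a :
  w0 \in S -> P \subset J -> agree_outside J S ->
  \sum_(u in S) (a - #|[set j in P | u j == w0 j]|) <= #|J :\: P| ->
  exists v, forall u, u \in S -> hamming v u <= #|J| - a.
Proof.
move=> w0S sPJ agreeS.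
rewrite -big_enum => /(exists_fun_large_fibres w0) [tau tauP].
pose v := [ffun i => if i \in J :\: P then tau i i else w0 i].
exists v => u uS.
rewrite (@hamming_agree_outside J) => [|i iNJ]; last first.
  by rewrite ffunE inE (negbTE iNJ) andbF (agreeS _ _ w0S uS).
apply: leq_sub2l.
set A1 := [set j in P | u j == w0 j]; set A2 := [set j in J :\: P | tau j == u].
have disA : [disjoint A1 & A2].
  rewrite -setI_eq0; apply/eqP/setP => j.
  by rewrite !inE; case: (j \in P); rewrite ?andbF.
have sAJ : A1 :|: A2 \subset [set j in J | v j == u j].
  apply/subsetP => j; rewrite !inE ffunE.
  case/orP => [/andP[jP /eqP<-] | /andP[/andP[jNP jJ] /eqP<-]].
    by rewrite (subsetP sPJ) // inE jP /= eqxx.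
  by rewrite jJ inE jNP jJ eqxx.
have [_] := leq_card_setU A1 A2; rewrite disA => /eqP cardA.
have := tauP u; rewrite mem_enum => /(_ uS) leA2.
by apply: leq_trans (subset_leq_card sAJ); rewrite cardA -leq_subLR.
Qed.

Definition isolated G w j := [forall c in G, (c j == w j) ==> (c == w)].

Lemma card_isolated_le G j : #|[set w in G | isolated G w j]| <= q.
Proof.
rewrite -(card_in_imset (f := fun w : word q n => w j)) => [|w1 w2].
  by rewrite (leq_trans (max_card _)) ?card_ord.
rewrite !inE => /andP[_ /forall_inP iso1] /andP[w2G _] eq12.
by apply/esym/eqP; apply: (implyP (iso1 w2 w2G)); rewrite eq12.
Qed.

Lemma card_mul_isolated_le G J t :
  (forall w, w \in G -> t <= #|[set j in J | isolated G w j]|) ->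
  #|G| * t <= #|J| * q.
Proof.
move=> leti; rewrite -sum_nat_const.
apply: (@leq_trans (\sum_(w in G) #|[set j in J | isolated G w j]|)).
  exact: leq_sum.
rewrite sum_card_sep -sum_nat_const.
by apply: leq_sum => j _; apply: card_isolated_le.
Qed.

Lemma exists_sharing_witnesses G P w0 :
  w0 \in G -> (forall j, j \in P -> ~~ isolated G w0 j) -> #|P| < #|G| ->
  exists S, [/\ w0 \in S, S \subset G, #|S| = #|P|.+1
            & #|P|.*2 <= \sum_(u in S) #|[set j in P | u j == w0 j]|].
Proof.
move=> w0G shared ltPG.
have /fin_all_exists[p pP] j :
    exists c, j \in P -> [/\ c \in G, c != w0 & c j = w0 j].
  case: (boolP (j \in P)) => [jP | jNP]; last by exists w0 => jP; case/negP: jNP.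
  have := shared j jP; rewrite negb_forall_in => /exists_inP[c cG].
  by rewrite negb_imply => /andP[/eqP cj cw]; exists c.
have sTG : w0 |: p @: P \subset G.
  rewrite subUset sub1set w0G; apply/subsetP => _ /imsetP[j jP ->].
  by case: (pP j jP).
have [S [sTS sSG cardS]] :
    exists S, [/\ w0 |: p @: P \subset S, S \subset G & #|S| = #|P|.+1].
  apply: exists_subset_card_between sTG _.
  by rewrite ltPG andbT cardsU1 -add1n leq_add ?leq_b1 ?leq_imset_card.
exists S; split => //; first by apply: (subsetP sTS); rewrite !inE eqxx.
rewrite sum_card_sep -muln2 -sum_nat_const; apply: leq_sum => j jP.
have [_ pjw0 pjj] := pP j jP.
have <- : #|[set w0; p j]| = 2 by rewrite cards2 eq_sym pjw0.
apply/subset_leq_card/subsetP => u; rewrite !inE => /orP[] /eqP->.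
  by rewrite (subsetP sTS) ?eqxx // !inE eqxx.
by rewrite (subsetP sTS) ?pjj ?eqxx // !inE imset_f ?orbT.
Qed.

Lemma exists_crowded_ball G J w0 k L :
  agree_outside J G -> w0 \in G -> L < #|G| ->
  L <= #|[set j in J | ~~ isolated G w0 j]| ->
  L.+1 * (#|J| - k) <= #|J| + L -> L <= #|J| - k -> k <= #|J| ->
  exists v, L < #|[set c in G | hamming v c <= k]|.
Proof.
move=> agreeG w0G ltLG leLsh hsum hLa hkJ.
have [P sPsh cardP] := exists_subset_card leLsh.
have sPJ : P \subset J.
  by apply: subset_trans sPsh _; apply/subsetP => j; rewrite inE => /andP[].
have [S [w0S sSG cardS sumS]] :
    exists S, [/\ w0 \in S, S \subset G, #|S| = #|P|.+1
    & #|P|.*2 <= \sum_(u in S) #|[set j in P | u j == w0 j]|].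
  apply: exists_sharing_witnesses; rewrite ?cardP //.
  by move=> j /(subsetP sPsh); rewrite inE => /andP[].
have agreeS : agree_outside J S.
  by move=> x y xS yS; apply: agreeG; apply: (subsetP sSG).
have [v vS] : exists v, forall u, u \in S -> hamming v u <= #|J| - (#|J| - k).
  apply: (exists_close_center w0S sPJ agreeS).
  (* Each coordinate of P is shared by w0 and its witness, so the demands sum
     to at most (L+1)(|J| - k) - 2L <= |J| - L. *)
  rewrite sumnB => [|u _]; last first.
    rewrite (leq_trans _ hLa) // -cardP; apply/subset_leq_card/subsetP => j.
    by rewrite inE => /andP[].
  rewrite sum_nat_const cardS cardsDS // cardP; rewrite cardP in sumS; nia.
exists v; rewrite -cardP -cardS; apply/subset_leq_card/subsetP => u uS.
by rewrite inE (subsetP sSG) //= (leq_trans (vS u uS)) // subKn.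
Qed.

Lemma card_agree_outside_le G J k L :
  agree_outside J G -> (forall v, #|[set c in G | hamming v c <= k]| <= L) ->
  L.+1 * (#|J| - k) <= #|J| + L -> L <= #|J| - k -> k <= #|J| -> L * L <= #|J| ->
  #|G| <= L \/ #|G| * #|J| <= q * (#|J| + L).
Proof.
move=> agreeG ballG hsum hLa hkJ hLJ.
have [leGL | ltLG] := leqP #|G| L; [by left | right].
apply: (leq_mul_of_mul_subn hLJ); apply: card_mul_isolated_le => w wG.
have : #|[set j in J | ~~ isolated G w j]| < L.
  rewrite ltnNge; apply/negP => leL.
  have [v] := exists_crowded_ball agreeG wG ltLG leL hsum hLa hkJ.
  by rewrite ltnNge ballG.
have := card_sep_predC J (isolated G w); lia.
Qed.

End Words.

Local Open Scope ring_scope.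

Lemma card_le_mul_fibres (R : numDomainType) (T U : finType) (f : T -> U)
    (A : {set T}) (B : R) :
  (forall y, #|[set x in A | f x == y]|%:R <= B) -> #|A|%:R <= #|U|%:R * B.
Proof.
move=> leB; have -> : #|A| = (\sum_(y : U) #|[set x in A | f x == y]|)%N.
  rewrite -sum1_card (partition_big f predT) //=.
  by apply: eq_bigr => y _; rewrite sum1dep_card.
rewrite natr_sum (le_trans (ler_sum _ (fun y _ => leB y))) //.
by rewrite sumr_const mulr_natl.
Qed.

Section Codes.
Variables q n : nat.

Lemma card_code_le_classes (R : numDomainType) (C : {set word q n})
    (J : {set 'I_n}) (B : R) :
  (forall G : {set word q n}, G \subset C -> agree_outside J G -> #|G|%:R <= B) ->
  #|C|%:R <= B * q%:R ^+ (n - #|J|).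
Proof.
move=> leB.
pose res (w : word q n) : {ffun {i | i \notin J} -> 'I_q} :=
  [ffun i => w (val i)].
have -> : q%:R ^+ (n - #|J|) = #|{ffun {i | i \notin J} -> 'I_q}|%:R :> R.
  rewrite card_ffun card_ord card_sig natrX; congr (_ ^+ _).
  have := cardC J; rewrite card_ord => cardJC.
  by rewrite -{1}cardJC addKn; apply: eq_card.
rewrite mulrC; apply: (card_le_mul_fibres (f := res)) => y; apply: leB.
  by apply/subsetP => w; rewrite inE => /andP[].
move=> x z; rewrite !inE => /andP[_ /eqP rx] /andP[_ /eqP rz] i iNJ.
have /(congr1 (fun f : {ffun _ -> 'I_q} => f (exist _ i iNJ))) :=
  etrans rx (esym rz).
by rewrite !ffunE.
Qed.

Lemma card_code_le_max (R : realFieldType) (C : {set word q n}) (k L m : nat) :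
  (m <= n)%N -> (0 < m)%N ->
  (forall v, #|[set c in C | hamming v c <= k]| <= L)%N ->
  (L.+1 * (m - k) <= m + L)%N -> (L <= m - k)%N -> (k <= m)%N -> (L * L <= m)%N ->
  #|C|%:R <= Num.max (q%:R * (1 + L%:R / m%:R)) L%:R * q%:R ^+ (n - m) :> R.
Proof.
move=> lemn m_gt0 ballC h1 h2 h3 h4.
have [J _ cardJ] := @exists_subset_card _ [set: 'I_n] m
  ltac:(by rewrite cardsT card_ord).
rewrite -cardJ; apply: card_code_le_classes => G sGC agreeG.
have ballG v : (#|[set c in G | hamming v c <= k]| <= L)%N.
  apply: leq_trans (ballC v); apply/subset_leq_card/subsetP => c.
  by rewrite !inE => /andP[cG ->]; rewrite (subsetP sGC).
have := card_agree_outside_le agreeG ballG; rewrite cardJ.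
case/(_ h1 h2 h3 h4) => [leGL | leGm].
  by rewrite le_max ler_nat leGL orbT.
have m0 : (0 : R) < m%:R by rewrite ltr0n.
rewrite le_max -(ler_pM2r m0); apply/orP; left.
have -> : q%:R * (1 + L%:R / m%:R) * m%:R = q%:R * (m + L)%:R :> R.
  by rewrite natrD; field; rewrite pnatr_eq0 -lt0n.
by rewrite -!natrM ler_nat.
Qed.

End Codes.

Lemma floor_natr_div (R : archiRealFieldType) (a d : nat) : (0 < d)%N ->
  Num.floor (a%:R / d%:R : R) = (a %/ d)%:Z.
Proof.
move=> d_gt0; apply: floor_def; rewrite -pmulrn -[_ + 1]PoszD -pmulrn addn1.
have d0 : (0 : R) < d%:R by rewrite ltr0n.
rewrite ler_pdivlMr // ltr_pdivrMr // -!natrM ler_nat ltr_nat.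
by rewrite leq_trunc_div ltn_ceil.
Qed.

Lemma window_bounds (L k n s : nat) :
  (s * L <= L.+1 * k)%N -> (L.+1 * k < s.+1 * L)%N ->
  (L * L.+1 < k)%N -> (L.+1 * k < L * n)%N ->
  [/\ (s.+1 <= n)%N, (L.+1 * (s.+1 - k) <= s.+1 + L)%N, (L <= s.+1 - k)%N,
      (k <= s.+1)%N & (L * L <= s.+1)%N].
Proof. by move=> *; split; nia. Qed.

Lemma rate_bounds (R : realFieldType) (L n k : nat) (r : R) :
  0 < r -> r < L%:R / L.+1%:R -> (L * L.+1)%:R / r < n%:R -> r * n%:R = k%:R ->
  (L * L.+1 < k)%N /\ (L.+1 * k < L * n)%N.
Proof.
move=> r_gt0 r_lt n_gt rnk; split.
  by rewrite -(ltr_nat R) -rnk mulrC -ltr_pdivrMr.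
have n_gt0 : (0 : R) < n%:R.
  by apply: le_lt_trans n_gt; rewrite divr_ge0 ?ler0n ?ltW.
by rewrite -(ltr_nat R) !natrM -rnk mulrA ltr_pM2r // mulrC -ltr_pdivlMr ?ltr0n.
Qed.

Lemma ratio_le_harmonic (R : realFieldType) (L m n k : nat) (r : R) :
  0 < r -> r <= 1 -> r * n%:R = k%:R -> (k < m)%N ->
  L%:R / m%:R <= harmonic n * (L%:R / r).
Proof.
move=> r_gt0 r_le1 rnk lt_km.
have m_gt0 : (0 < m)%N by apply: leq_ltn_trans lt_km.
rewrite /harmonic /= mulrCA -invfM ler_wpM2l ?ler0n //.
rewrite lef_pV2 ?posrE ?ltr0n ?mulr_gt0 //.
rewrite mulrC -natr1 mulrDr mulr1 rnk.
by apply: (@le_trans _ _ (k%:R + 1)); rewrite ?lerD2l // natr1 ler_nat.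
Qed.

Lemma list_decodable_card_le (R : realType) (L : nat) (r : R) q n k
    (C : {set word q n}) :
  (1 <= L)%N -> 0 < r -> r < L%:R / L.+1%:R -> (L * L.+1)%:R / r < n%:R ->
  r * n%:R = k%:R -> list_decodable r L C ->
  #|C|%:R <= Num.max (q%:R * (1 + harmonic n * (L%:R / r))) L%:R *
    q%:R ^ (n%:Z - (Num.floor ((L.+1)%:R / L%:R * (r * n%:R)) + 1)).
Proof.
move=> L_gt0 r_gt0 r_lt n_gt rnk listC.
have [k_gt kn_lt] := rate_bounds r_gt0 r_lt n_gt rnk.
set s := ((L.+1 * k) %/ L)%N.
have [lesn h1 h2 h3 h4] :=
  window_bounds (leq_trunc_div _ L) (ltn_ceil _ L_gt0) k_gt kn_lt.
have -> : n%:Z - (Num.floor ((L.+1)%:R / L%:R * (r * n%:R)) + 1) = (n - s.+1)%N.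
  by rewrite rnk mulrAC -natrM floor_natr_div // -/s; lia.
have ballC v : (#|[set c in C | hamming v c <= k]| <= L)%N.
  apply: leq_trans (listC v); apply/subset_leq_card/subsetP => c.
  by rewrite !inE rnk ler_nat.
rewrite -exprnP.
apply: le_trans (card_code_le_max R lesn (ltn0Sn s) ballC h1 h2 h3 h4) _.
rewrite ler_wpM2r ?exprn_ge0 ?ler0n // le_max2 // ler_wpM2l ?ler0n // lerD2l.
apply: (ratio_le_harmonic L r_gt0 _ rnk); last by move: h2 L_gt0; lia.
by rewrite ltW // (lt_le_trans r_lt) // ler_pdivrMr ?ltr0n // mul1r ler_nat.
Qed.

Unset Implicit Arguments.

Theorem theorem3p1 (R : realType) (L : nat) (r : R) :
  (1 <= L)%N -> 0 <= r -> r < L%:R / (L.+1)%:R ->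
  exists (N : nat) (g : nat -> R),
    (forall n, 0 <= g n) /\ (g n @[n --> \oo] --> 0)%classic /\
    forall (q n : nat), (2 <= q)%N -> (N <= n)%N ->
      (exists k : nat, r * n%:R = k%:R) ->
      forall C : {set word q n}, list_decodable r L C ->
        #|C|%:R <= Num.max (q%:R * (1 + g n)) L%:R *
          q%:R ^ (n%:Z - (Num.floor ((L.+1)%:R / L%:R * (r * n%:R)) + 1)).
Proof.
move=> L_gt0 r_ge0 r_lt.
(* n >= N forces k = r n > L (L+1), whence L^2 <= m and L <= m - k. *)
exists (Num.trunc ((L * L.+1)%:R / r)).+1, (fun n => harmonic n * (L%:R / r)).
split; [|split].
- by move=> n; rewrite mulr_ge0 ?harmonic_ge0 ?divr_ge0 ?ler0n.
- by rewrite -(mul0r (L%:R / r)); apply: cvgMr_tmp; apply: cvg_harmonic.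
move=> q n _ leNn [k rnk] C listC.
have [r_gt0 | r0] := boolP (0 < r).
  apply: list_decodable_card_le rnk listC => //.
  by apply: lt_le_trans (truncnS_gt _) _; rewrite ler_nat.
(* For r = 0 the junk value 1/0 = 0 makes g vanish: the bound is q^n. *)
have {r_ge0 r0} -> : r = 0 by apply/eqP; rewrite eq_le r_ge0 leNgt r0.
have n_gt0 : (0 < n)%N by apply: leq_trans leNn.
rewrite invr0 !(mulr0, mul0r) floor0 add0r addr0 mulr1.
have -> : n%:Z - 1 = n.-1 by lia.
rewrite -exprnP; apply: (@le_trans _ _ (q%:R * q%:R ^+ n.-1)).
  rewrite -exprS prednK // -natrX ler_nat (leq_trans (max_card _)) //.
  by rewrite card_ffun !card_ord.
by rewrite ler_wpM2r ?exprn_ge0 ?ler0n // le_max lexx.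
Qed.
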